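(* Let $k\ge2$, $n\ge1$ be integers, let $\bar{\mathcal{P}}\in\mathbb{R}^{[k,n]}$ be a columnwise-substochastic tensor, $\mathbf{v}\in\mathbb{R}^n$ a stochastic vector and $\alpha\in[0,1)$ with $\varsigma:=(2k-3)\alpha(1-\alpha)^{-\frac{k-2}{k-1}}<1$. Then the MLPPR system $(\mathbf{e}^T\mathbf{y})^{k-2}\mathbf{y}-\alpha\bar{\mathcal{P}}\mathbf{y}^{k-1}=\mathbf{v}$ has a unique nonnegative solution $\mathbf{y}_*$ in $\Delta:=\{\mathbf{y}\in\mathbb{R}^n_+:\mathbf{e}^T\mathbf{y}\le(1-\alpha)^{-\frac{1}{k-1}}\}$.
   Context: For $\mathcal{P}\in\mathbb{R}^{[k,n]}$ (real tensors of order $k$, dimension $n$) and $\mathbf{y}\in\mathbb{R}^n$, $(\mathcal{P}\mathbf{y}^{k-1})_i=\sum_{i_2,\dots,i_k}p_{i i_2\dots i_k}y_{i_2}\cdots y_{i_k}$. $\bar{\mathcal{P}}$ is columnwise-substochastic if its entries are nonnegative and $\sum_{i}\bar p_{i i_2\dots i_k}\le1$ for all $i_2,\dots,i_k$. $\mathbf{e}$ is the all-ones vector; a stochastic vector is nonnegative with entries summing to $1$. The MLPPR system $(I\circ\mathbf{e}^{\circ(k-2)}-\alpha\bar{\mathcal{P}})\mathbf{y}^{k-1}=\mathbf{v}$ is exactly $(\mathbf{e}^T\mathbf{y})^{k-2}\mathbf{y}-\alpha\bar{\mathcal{P}}\mathbf{y}^{k-1}=\mathbf{v}$. *)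

From HB Require Import structures.
From mathcomp Require Import all_boot all_order all_algebra.
From mathcomp Require Import reals exp.
Set Implicit Arguments. Unset Strict Implicit. Unset Printing Implicit Defensive.
Import Order.TTheory GRing.Theory Num.Theory.
Local Open Scope ring_scope.

(* A real tensor of order k and dimension n: entry p_{i i_2 ... i_k} is
   P i f, where f : 'I_(k-1) -> 'I_n lists the indices (i_2,...,i_k). *)
Definition tensor (R : realType) (k n : nat) :=
  'I_n -> {ffun 'I_k.-1 -> 'I_n} -> R.

Definition tapply (R : realType) (k n : nat) (P : tensor R k n)
    (y : 'I_n -> R) (i : 'I_n) : R :=
  \sum_(f : {ffun 'I_k.-1 -> 'I_n}) P i f * \prod_(j < k.-1) y (f j).

Definition col_substochastic (R : realType) (k n : nat) (P : tensor R k n) :=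
  (forall i f, 0 <= P i f) /\ (forall f, \sum_(i < n) P i f <= 1).

Definition stochastic_vec (R : realType) (n : nat) (v : 'I_n -> R) :=
  (forall i, 0 <= v i) /\ \sum_(i < n) v i = 1.

Definition mlppr_sol (R : realType) (k n : nat) (alpha : R) (P : tensor R k n)
    (v y : 'I_n -> R) :=
  forall i, (\sum_(j < n) y j) ^+ (k - 2) * y i - alpha * tapply P y i = v i.

Definition in_Delta (R : realType) (k n : nat) (alpha : R) (y : 'I_n -> R) :=
  (forall i, 0 <= y i) /\
  \sum_(i < n) y i <= powR (1 - alpha) (- (1 / (k%:R - 1))).

Definition varsigma (R : realType) (k : nat) (alpha : R) : R :=
  (2 * k - 3)%:R * alpha * powR (1 - alpha) (- ((k%:R - 2) / (k%:R - 1))).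

From HB Require Import structures.
From mathcomp Require Import all_boot all_order all_algebra interval_inference.
From mathcomp Require Import boolp classical_sets functions topology normedtype sequences.
From mathcomp Require Import reals exp.
From mathcomp Require Import ring lra zify.
Import Order.TTheory GRing.Theory Num.Theory.
Import numFieldNormedType.Exports.
Local Open Scope classical_set_scope.
Local Open Scope ring_scope.

(* Write a nonnegative solution as y = t x with t = e^T y and e^T x = 1.  The system
   becomes t^(k-1) (x - alpha P x^(k-1)) = v, and summing it gives
   t^(k-1) (1 - alpha e^T P x^(k-1)) = 1; hence x is a fixed point on the simplex of
     F x = alpha P x^(k-1) + (1 - alpha e^T P x^(k-1)) v
   and t is determined by x.  Conversely every fixed point of F yields a solution this
   way, lying in Delta because 1 - alpha e^T P x^(k-1) >= 1 - alpha.  Telescoping the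
   difference of the monomials x_(i_2)...x_(i_k) shows that F is an l1-contraction of the
   simplex with constant (k-1) alpha <= varsigma < 1, so Banach's fixed point theorem
   gives existence and uniqueness. *)

(* The library proves matrices complete but does not register them as a complete
   normed module. *)
HB.instance Definition _ (R : realType) (m n : nat) :=
  Uniform_isComplete.Build 'M[R]_(m, n) (@mx_complete R m n).

Section ProductsOfCoordinates.
Context {R : numDomainType}.

Lemma sum_ffun_prod (m n : nat) (x : 'I_n -> R) :
  \sum_(f : {ffun 'I_m -> 'I_n}) \prod_(j < m) x (f j) = (\sum_i x i) ^+ m.
Proof.
by rewrite -(bigA_distr_bigA (fun (_ : 'I_m) (i : 'I_n) => x i)) prodr_const card_ord.
Qed.

Lemma ler_norm_prodB (m : nat) (a b : nat -> R) :
  (forall j, 0 <= a j) -> (forall j, 0 <= b j) ->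
  `|\prod_(j < m) a j - \prod_(j < m) b j| <=
  \sum_(l < m) \prod_(j < m)
     (if (j < l)%N then b j else if j == l :> nat then `|a j - b j| else a j).
Proof.
move=> a0 b0; elim: m => [|m IH]; first by rewrite !big_ord0 subrr normr0.
rewrite big_ord_recr /= !big_ord_recr /=.
have -> : \prod_(i < m) a i * a m - \prod_(i < m) b i * b m =
   (\prod_(i < m) a i - \prod_(i < m) b i) * a m + \prod_(i < m) b i * (a m - b m).
  by ring.
apply: (le_trans (ler_normD _ _)); apply: lerD.
  rewrite normrM (ger0_norm (a0 m)).
  apply: le_trans (ler_wpM2r (a0 m) IH) _; rewrite mulr_suml.
  by apply: ler_sum => l _; rewrite big_ord_recr /= ltnNge ltnW //= gtn_eqF.
rewrite ltnn eqxx normrM ger0_norm ?prodr_ge0 //.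
by rewrite ler_wpM2r //; under [X in _ <= X]eq_bigr => j _ do rewrite ltn_ord.
Qed.

End ProductsOfCoordinates.

(* Summed over f, the l-th telescoping term factorises as
   (e^T y)^l * |x - y|_1 * (e^T x)^(m-l-1) = |x - y|_1. *)
Lemma sum_ffun_norm_prodB {R : realType} (m n : nat) (x y : 'I_n -> R) :
  stochastic_vec x -> stochastic_vec y ->
  \sum_(f : {ffun 'I_m -> 'I_n}) `|\prod_j x (f j) - \prod_j y (f j)|
    <= m%:R * \sum_i `|x i - y i|.
Proof.
move=> [x0 x1] [y0 y1]; case: m => [|m].
  by rewrite mul0r big1 // => f _; rewrite !big_ord0 subrr normr0.
pose g (l j : nat) (i : 'I_n) :=
  if (j < l)%N then y i else if j == l then `|x i - y i| else x i.
have telescope (f : {ffun 'I_m.+1 -> 'I_n}) :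
    `|\prod_j x (f j) - \prod_j y (f j)| <= \sum_(l < m.+1) \prod_(j < m.+1) g l j (f j).
  have prod_inord (h : 'I_n -> R) :
      \prod_(j < m.+1) h (f (inord j)) = \prod_j h (f j).
    by apply: eq_bigr => j _; rewrite inord_val.
  have := ler_norm_prodB m.+1 (fun j => x (f (inord j))) (fun j => y (f (inord j)))
    (fun _ => x0 _) (fun _ => y0 _).
  rewrite !prod_inord => /le_trans; apply; apply: ler_sum => l _.
  by rewrite (eq_bigr (fun j : 'I_m.+1 => g l j (f j))) // => j _; rewrite inord_val.
apply: (le_trans (ler_sum _ (fun f _ => telescope f))); rewrite exchange_big /=.
rewrite (eq_bigr (fun _ => \sum_i `|x i - y i|)); last first.
  move=> l _; rewrite -(bigA_distr_bigA (fun (j : 'I_m.+1) i => g l j i)) /=.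
  rewrite (bigD1 l) //= [X in _ * X]big1 ?mulr1.
    by apply: eq_bigr => i _; rewrite /g ltnn eqxx.
  move=> j jl; have jlF : (j == l :> nat) = false by exact: negbTE jl.
  by rewrite /g jlF; case: (j < l)%N; [exact: y1 | exact: x1].
by rewrite sumr_const card_ord mulr_natl.
Qed.

Lemma banach_fixed_point_lipschitz {R : realType} {X : completeNormedModType R}
    (U : set X) (G : X -> X) (q : R) :
  0 <= q -> q < 1 -> closed U -> U !=set0 -> (forall x, U x -> U (G x)) ->
  (forall x y, U x -> U y -> `|G x - G y| <= q * `|x - y|) ->
  exists2 p, U p & G p = p.
Proof.
move=> q0 q1 cU U0 GU Glip.
pose Gf : {fun U >-> U} := HB.pack G (isFun.Build _ _ U U G GU).
have Gctr : is_contraction Gf.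
  by exists (NngNum q0); split => // -[x y] /= [Ux Uy]; exact: Glip.
by have [p Up pG] := banach_fixed_point Gctr cU U0; exists p.
Qed.

Lemma exists_expr_mul_lt1 {R : realType} (q c : R) :
  `|q| < 1 -> exists N, q ^+ N * c < 1.
Proof.
move=> q1; have : (fun N => q ^+ N * c) @ \oo --> (0 : R).
  by rewrite -(mul0r c); apply: cvgMl; exact: cvg_expr.
by move=> /cvgr_lt/(_ 1 ltr01) [N _ HN]; exists N; apply: HN => /=.
Qed.

Section L1Contraction.
Context {R : realType} {n : nat}.

Lemma mx_norm_le_sum (x : 'rV[R]_n) : `|x| <= \sum_i `|x ord0 i|.
Proof.
rewrite [`|x|]mx_normrE; apply: bigmax_le => [|[a i] _ /=]; first exact: sumr_ge0.
by rewrite (ord1 a) (bigD1 i) //= lerDl sumr_ge0.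
Qed.

Lemma sum_le_mx_norm (x : 'rV[R]_n) : \sum_i `|x ord0 i| <= n%:R * `|x|.
Proof.
have le_x i : `|x ord0 i| <= `|x|.
  rewrite [`|x|]mx_normrE.
  exact: (le_bigmax 0 (fun ij : 'I_1 * 'I_n => `|x ij.1 ij.2|) (ord0, i)).
apply: le_trans (ler_sum _ (fun i _ => le_x i)) _.
by rewrite sumr_const card_ord mulr_natl.
Qed.

Lemma closed_stochastic_rV : closed [set x : 'rV[R]_n | stochastic_vec (x ord0)].
Proof.
have -> : [set x : 'rV[R]_n | stochastic_vec (x ord0)] =
    (\bigcap_(i in setT) [set x : 'rV[R]_n | 0 <= x ord0 i]) `&`
    ((fun x : 'rV[R]_n => \sum_i x ord0 i) @^-1` [set 1]).
  apply/seteqP; split => x /= [x0 x1]; split => // i; first by move=> _; exact: x0.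
  exact: x0 i I.
apply: closedI.
  apply: closed_bigI => i _.
  apply: (@preimage_closed _ _ (fun x : 'rV[R]_n => x ord0 i) [set r : R | 0 <= r]).
    by move=> x _; apply: coord_continuous.
  exact: closed_ge.
apply: preimage_closed; last exact: closed_eq.
move=> x _; apply: continuous_big => //; first exact: add_continuous.
by move=> i _; apply: coord_continuous.
Qed.

Lemma l1_contraction_fixpoint_unique (F : ('I_n -> R) -> 'I_n -> R) (q : R)
    (x y : 'I_n -> R) :
  q < 1 -> F x = x -> F y = y ->
  \sum_i `|F x i - F y i| <= q * \sum_i `|x i - y i| -> x = y.
Proof.
move=> q1 Fx Fy; rewrite Fx Fy => le_dist.
have dist0 : \sum_i `|x i - y i| = 0.
  apply/eqP; rewrite eq_le sumr_ge0 // andbT.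
  have q1' : 0 < 1 - q by rewrite subr_gt0.
  by rewrite -(pmulr_rle0 _ q1') mulrBl mul1r subr_le0.
apply/funext => i; apply/eqP; rewrite -subr_eq0 -normr_eq0; apply/eqP.
exact: (psumr_eq0P (fun i _ => normr_ge0 _) dist0).
Qed.

Variables (F : ('I_n -> R) -> 'I_n -> R) (q : R).
Hypothesis q_ge0 : 0 <= q.
Hypothesis F_stochastic : forall x, stochastic_vec x -> stochastic_vec (F x).
Hypothesis F_lipschitz : forall x y, stochastic_vec x -> stochastic_vec y ->
  \sum_i `|F x i - F y i| <= q * \sum_i `|x i - y i|.

Lemma iter_stochastic N {x} : stochastic_vec x -> stochastic_vec (iter N F x).
Proof. by move=> x_st; elim: N => //= N; exact: F_stochastic. Qed.

Lemma iter_lipschitz N {x y} : stochastic_vec x -> stochastic_vec y ->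
  \sum_i `|iter N F x i - iter N F y i| <= q ^+ N * \sum_i `|x i - y i|.
Proof.
move=> x_st y_st; elim: N => [|N IH] /=; first by rewrite expr0 mul1r.
apply: le_trans (F_lipschitz _ _ (iter_stochastic N x_st) (iter_stochastic N y_st)) _.
by rewrite exprS -mulrA ler_wpM2l.
Qed.

(* The library norm on rows is the max norm, for which F itself need not be a
   contraction; a power F^N with q^N n < 1 is one. *)
Lemma l1_contraction_fixpoint :
  (0 < n)%N -> q < 1 -> exists2 x, stochastic_vec x & F x = x.
Proof.
move=> n_gt0 q1.
have [N qNn] : exists N, q ^+ N * n%:R < 1 by apply: exists_expr_mul_lt1; rewrite ger0_norm.
pose U := [set x : 'rV[R]_n | stochastic_vec (x ord0)].
pose G (x : 'rV[R]_n) := \row_i iter N F (x ord0) i.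
have GE x : G x ord0 = iter N F (x ord0) by apply/funext => i; rewrite mxE.
have [p Up Gp] : exists2 p, U p & G p = p.
  apply: (banach_fixed_point_lipschitz U G (q ^+ N * n%:R)) => //.
  - by rewrite mulr_ge0 ?exprn_ge0.
  - exact: closed_stochastic_rV.
  - exists (const_mx n%:R^-1); split => [i|]; first by rewrite mxE invr_ge0.
    under eq_bigr => i _ do rewrite mxE.
    by rewrite sumr_const card_ord -[_ *+ n]mulr_natr mulVf // pnatr_eq0 -lt0n.
  - by move=> x Ux; rewrite /U /= GE; exact: iter_stochastic.
  move=> x y Ux Uy; apply: le_trans (mx_norm_le_sum _) _.
  under eq_bigr => i _ do rewrite !mxE.
  apply: le_trans (iter_lipschitz N Ux Uy) _; rewrite -mulrA ler_wpM2l ?exprn_ge0 //.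
  apply: le_trans (sum_le_mx_norm (x - y)).
  by under [X in _ <= X]eq_bigr => i _ do rewrite !mxE.
have FNp : iter N F (p ord0) = p ord0 by rewrite -GE Gp.
exists (p ord0) => //.
have qN1 : q ^+ N < 1 by apply: le_lt_trans qNn; rewrite ler_peMr ?exprn_ge0 // ler1n.
apply: (l1_contraction_fixpoint_unique (iter N F) _ _ _ qN1).
- by rewrite -iterSr iterS FNp.
- exact: FNp.
- exact: iter_lipschitz (F_stochastic _ Up) Up.
Qed.

End L1Contraction.

Lemma exprn_powR_Nroot {R : realType} (c : R) (m : nat) :
  0 <= c -> (0 < m)%N -> powR c (- (1 / m%:R)) ^+ m = c^-1.
Proof.
move=> c0 m_gt0; have m0 : (m%:R : R) != 0 by rewrite pnatr_eq0 -lt0n.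
by rewrite -powR_mulrn ?powR_ge0 // -powRrM mulNr div1r mulVf // powR_inv1.
Qed.

Lemma varsigma_ge {R : realType} (k : nat) (alpha : R) :
  (1 < k)%N -> 0 <= alpha -> alpha < 1 -> alpha * k.-1%:R <= varsigma k alpha.
Proof.
move=> k_gt1 a0 a1; rewrite /varsigma.
have pow_ge1 : 1 <= powR (1 - alpha) (- ((k%:R - 2) / (k%:R - 1))).
  rewrite -[leLHS](powRr0 (1 - alpha)); apply: ger_powR; first by apply/andP; split; lra.
  have k2 : (2 : R) <= k%:R by rewrite (ler_nat R 2 k).
  by rewrite oppr_le0 divr_ge0 //; lra.
apply: (@le_trans _ _ ((2 * k - 3)%:R * alpha * 1)); last first.
  by rewrite ler_wpM2l // mulr_ge0.
by rewrite mulr1 mulrC ler_wpM2r // ler_nat; lia.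
Qed.

Section MultilinearPageRank.
Context {R : realType} {k n : nat} (P : tensor R k n) (alpha : R) (v : 'I_n -> R).
Hypothesis P_ge0 : forall i f, 0 <= P i f.
Hypothesis P_colsum : forall f, \sum_(i < n) P i f <= 1.
Hypothesis v_stochastic : stochastic_vec v.
Hypothesis alpha_ge0 : 0 <= alpha.

Definition tmass (y : 'I_n -> R) := \sum_i tapply P y i.

Definition mlppr_map (x : 'I_n -> R) (i : 'I_n) :=
  alpha * tapply P x i + (1 - alpha * tmass x) * v i.

Definition stochastic_completion (i : 'I_n) (f : {ffun 'I_k.-1 -> 'I_n}) :=
  P i f + (1 - \sum_l P l f) * v i.

Lemma tapply_ge0 y i : (forall j, 0 <= y j) -> 0 <= tapply P y i.
Proof. by move=> y0; apply: sumr_ge0 => f _; rewrite mulr_ge0 ?prodr_ge0. Qed.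

Lemma tmass_ge0 y : (forall j, 0 <= y j) -> 0 <= tmass y.
Proof. by move=> y0; apply: sumr_ge0 => i _; exact: tapply_ge0. Qed.

Lemma tmassE y : tmass y = \sum_f (\sum_i P i f) * \prod_(j < k.-1) y (f j).
Proof.
by rewrite /tmass /tapply exchange_big; apply: eq_bigr => f _; rewrite mulr_suml.
Qed.

Lemma tmass_le1 x : stochastic_vec x -> tmass x <= 1.
Proof.
move=> [x0 x1]; rewrite tmassE.
apply: (@le_trans _ _ (\sum_(f : {ffun 'I_k.-1 -> 'I_n}) \prod_j x (f j))).
  by apply: ler_sum => f _; rewrite ler_piMl ?prodr_ge0.
by rewrite sum_ffun_prod x1 expr1n.
Qed.

Lemma tapplyZ c y i : tapply P (fun j => c * y j) i = c ^+ k.-1 * tapply P y i.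
Proof.
rewrite /tapply mulr_sumr; apply: eq_bigr => f _.
by rewrite big_split prodr_const card_ord mulrCA.
Qed.

Lemma stochastic_completion_ge0 i f : 0 <= stochastic_completion i f.
Proof.
by case: v_stochastic => v0 _; rewrite addr_ge0 ?mulr_ge0 // subr_ge0.
Qed.

Lemma stochastic_completion_colsum f : \sum_i stochastic_completion i f = 1.
Proof.
case: v_stochastic => _ v1.
by rewrite big_split /= -mulr_sumr v1 mulr1 addrC subrK.
Qed.

Lemma mlppr_mapB x y i : \sum_j x j = \sum_j y j ->
  mlppr_map x i - mlppr_map y i =
  alpha * \sum_(f : {ffun 'I_k.-1 -> 'I_n})
    (\prod_(j < k.-1) x (f j) - \prod_(j < k.-1) y (f j)) * stochastic_completion i f.
Proof.
move=> sum_xy.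
pose D (f : {ffun 'I_k.-1 -> 'I_n}) := \prod_(j < k.-1) x (f j) - \prod_(j < k.-1) y (f j).
have sum_D : \sum_f D f = 0 by rewrite sumrB !sum_ffun_prod sum_xy subrr.
have tapplyB : tapply P x i - tapply P y i = \sum_f P i f * D f.
  by rewrite /tapply -sumrB; apply: eq_bigr => f _; rewrite mulrBr.
have tmassB : tmass x - tmass y = \sum_f (\sum_l P l f) * D f.
  by rewrite !tmassE -sumrB; apply: eq_bigr => f _; rewrite mulrBr.
have -> : \sum_f D f * stochastic_completion i f =
    \sum_f P i f * D f + v i * \sum_f D f - v i * \sum_f (\sum_l P l f) * D f.
  rewrite !mulr_sumr -big_split -sumrB /=; apply: eq_bigr => f _.
  rewrite /stochastic_completion; ring.
rewrite sum_D mulr0 addr0 -tapplyB -tmassB /mlppr_map; ring.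
Qed.

Hypothesis alpha_le1 : alpha <= 1.

Lemma mlppr_map_stochastic x : stochastic_vec x -> stochastic_vec (mlppr_map x).
Proof.
move=> x_st; have [x0 _] := x_st; have [v0 v1] := v_stochastic.
have mass_le1 : alpha * tmass x <= 1.
  by rewrite -[1]mulr1 ler_pM ?tmass_ge0 ?tmass_le1.
split => [i|]; first by rewrite addr_ge0 ?mulr_ge0 ?tapply_ge0 ?subr_ge0.
by rewrite big_split /= -!mulr_sumr v1 mulr1 addrC subrK.
Qed.

Lemma mlppr_map_lipschitz x y : stochastic_vec x -> stochastic_vec y ->
  \sum_i `|mlppr_map x i - mlppr_map y i| <=
  alpha * k.-1%:R * \sum_i `|x i - y i|.
Proof.
move=> x_st y_st; have sum_xy : \sum_j x j = \sum_j y j.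
  by case: x_st => _ ->; case: y_st => _ ->.
pose D (f : {ffun 'I_k.-1 -> 'I_n}) :=
  `|\prod_(j < k.-1) x (f j) - \prod_(j < k.-1) y (f j)|.
apply: (@le_trans _ _ (alpha * \sum_f D f)); last first.
  by rewrite -mulrA ler_wpM2l // sum_ffun_norm_prodB.
apply: (@le_trans _ _ (\sum_i alpha * \sum_f D f * stochastic_completion i f)).
  apply: ler_sum => i _; rewrite mlppr_mapB // normrM ger0_norm // ler_wpM2l //.
  apply: le_trans (ler_norm_sum _ _ _) _; apply: ler_sum => f _.
  by rewrite normrM (ger0_norm (stochastic_completion_ge0 _ _)).
rewrite -mulr_sumr ler_wpM2l // exchange_big /=; apply: ler_sum => f _.
by rewrite -mulr_sumr stochastic_completion_colsum mulr1.
Qed.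

Hypothesis k_gt1 : (1 < k)%N.

Lemma mlppr_sol_scaleE x s : \sum_i x i = 1 ->
  mlppr_sol alpha P v (fun i => s * x i) <->
  forall i, s ^+ k.-1 * (x i - alpha * tapply P x i) = v i.
Proof.
move=> x1; have residualE i :
    (\sum_j s * x j) ^+ (k - 2) * (s * x i) - alpha * tapply P (fun j => s * x j) i
    = s ^+ k.-1 * (x i - alpha * tapply P x i).
  rewrite -mulr_sumr x1 mulr1 tapplyZ mulrA -exprSr.
  have -> : (k - 2).+1 = k.-1 by rewrite -subSn // subSS subn1.
  by rewrite mulrBr mulrCA.
by split => sol i; [rewrite -residualE | rewrite residualE]; exact: sol.
Qed.

Lemma mlppr_sol_of_fixpoint x s : \sum_i x i = 1 -> mlppr_map x = x ->
  s ^+ k.-1 * (1 - alpha * tmass x) = 1 -> mlppr_sol alpha P v (fun i => s * x i).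
Proof.
move=> x1 Fx scale; apply/(mlppr_sol_scaleE x s x1) => i.
have -> : x i - alpha * tapply P x i = (1 - alpha * tmass x) * v i.
  by rewrite -{1}Fx /mlppr_map addrAC subrr add0r.
by rewrite mulrA scale mul1r.
Qed.

Lemma fixpoint_of_mlppr_sol x s : \sum_i x i = 1 ->
  mlppr_sol alpha P v (fun i => s * x i) ->
  mlppr_map x = x /\ s ^+ k.-1 * (1 - alpha * tmass x) = 1.
Proof.
move=> x1 /(mlppr_sol_scaleE x s x1) sol; have [_ v1] := v_stochastic.
have scale : s ^+ k.-1 * (1 - alpha * tmass x) = 1.
  by rewrite -[RHS]v1 -(eq_bigr _ (fun i _ => sol i)) -mulr_sumr sumrB x1 -mulr_sumr.
split => //; apply/funext => i.
by rewrite /mlppr_map -(sol i) mulrA [_ * s ^+ _]mulrC scale mul1r addrC subrK.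
Qed.

Lemma mlppr_sol_sum_gt0 z : (forall i, 0 <= z i) -> mlppr_sol alpha P v z ->
  0 < \sum_i z i.
Proof.
move=> z0 sol; have [_ v1] := v_stochastic.
have mass : (\sum_i z i) ^+ (k - 2) * \sum_i z i - alpha * tmass z = 1.
  by rewrite -[RHS]v1 -(eq_bigr _ (fun i _ => sol i)) sumrB -!mulr_sumr.
rewrite lt_def sumr_ge0 // andbT; apply/eqP => z_sum0.
have : 0 <= alpha * tmass z by rewrite mulr_ge0 ?tmass_ge0.
by move: mass; rewrite z_sum0 mulr0 sub0r; lra.
Qed.

Hypothesis alpha_lt1 : alpha < 1.

Let km1_gt0 : (0 < k.-1)%N. Proof. by rewrite -subn1 subn_gt0. Qed.

Let natr_km1 : k%:R - 1 = k.-1%:R :> R. Proof. by rewrite -subn1 natrB // ltnW. Qed.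

Definition mlppr_scale (x : 'I_n -> R) := powR (1 - alpha * tmass x) (- (1 / (k%:R - 1))).

Lemma alpha_tmass_lt1 x : stochastic_vec x -> alpha * tmass x < 1.
Proof. by move=> x_st; apply: le_lt_trans alpha_lt1; rewrite ler_piMr ?tmass_le1. Qed.

Lemma mlppr_scale_spec x : stochastic_vec x ->
  mlppr_scale x ^+ k.-1 * (1 - alpha * tmass x) = 1.
Proof.
move=> /alpha_tmass_lt1; rewrite -subr_gt0 => mass_gt0.
by rewrite /mlppr_scale natr_km1 exprn_powR_Nroot ?(ltW mass_gt0) // mulVf ?gt_eqF.
Qed.

Lemma mlppr_scale_in_Delta x : stochastic_vec x ->
  in_Delta k alpha (fun i => mlppr_scale x * x i).
Proof.
move=> x_st; have [x0 x1] := x_st; have mass_lt1 := alpha_tmass_lt1 x x_st.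
split => [i|]; first by rewrite mulr_ge0 ?powR_ge0.
rewrite -mulr_sumr x1 mulr1 /mlppr_scale !powRN.
rewrite lef_pV2 ?posrE ?powR_gt0 ?subr_gt0 //.
apply: ge0_ler_powR; rewrite ?nnegrE ?subr_ge0 ?(ltW alpha_lt1) ?(ltW mass_lt1) //.
  by rewrite natr_km1 divr_ge0.
by rewrite lerD2l lerN2 ler_piMr ?tmass_le1.
Qed.

Lemma mlppr_sol_normalize z : (forall i, 0 <= z i) -> mlppr_sol alpha P v z ->
  exists x, [/\ stochastic_vec x, mlppr_map x = x & z = (fun i => mlppr_scale x * x i)].
Proof.
move=> z0 zsol; have t_gt0 := mlppr_sol_sum_gt0 _ z0 zsol.
set t := \sum_j z j in t_gt0; pose x j := z j / t.
have zE : z = (fun j => t * x j) by apply/funext => j; rewrite mulrC divfK ?gt_eqF.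
have x_st : stochastic_vec x.
  split => [j|]; first by rewrite /x divr_ge0 ?z0 ?ltW.
  by rewrite /x -mulr_suml mulfV ?gt_eqF.
rewrite zE in zsol; have [Fx t_scale] := fixpoint_of_mlppr_sol x t x_st.2 zsol.
exists x; split => //; suff <- : t = mlppr_scale x by exact: zE.
have : t ^+ k.-1 = mlppr_scale x ^+ k.-1.
  apply: (mulIf (lt0r_neq0 (_ : 0 < 1 - alpha * tmass x))) => /=.
    by rewrite subr_gt0 alpha_tmass_lt1.
  by rewrite mlppr_scale_spec.
by move/eqP; rewrite eqrXn2 ?powR_ge0 ?(ltW t_gt0) // => /eqP.
Qed.

End MultilinearPageRank.

Theorem corollary3p11 (R : realType) (k n : nat) (hk : (2 <= k)%N) (hn : (1 <= n)%N)
  (P : tensor R k n) (v : 'I_n -> R) (alpha : R)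
  (hP : col_substochastic P) (hv : stochastic_vec v)
  (ha0 : 0 <= alpha) (ha1 : alpha < 1) (hs : varsigma k alpha < 1) :
  exists y : 'I_n -> R,
    [/\ in_Delta k alpha y, mlppr_sol alpha P v y &
        forall z : 'I_n -> R, in_Delta k alpha z -> mlppr_sol alpha P v z ->
          forall i, z i = y i].
Proof.
have [P0 P1] := hP.
have q1 : alpha * k.-1%:R < 1 := le_lt_trans (varsigma_ge _ _ hk ha0 ha1) hs.
have F_lip := mlppr_map_lipschitz P alpha v P0 P1 hv ha0.
have [x x_st Fx] := l1_contraction_fixpoint _ _ (mulr_ge0 ha0 (ler0n _ _))
  (mlppr_map_stochastic P alpha v P0 P1 hv ha0 (ltW ha1)) F_lip hn q1.
exists (fun i => mlppr_scale P alpha x * x i); split.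
- exact: mlppr_scale_in_Delta.
- by apply: mlppr_sol_of_fixpoint => //; [exact: x_st.2 | exact: mlppr_scale_spec].
move=> z [z0 _] zsol i.
have [y [y_st Fy ->]] := mlppr_sol_normalize P alpha v P0 P1 hv ha0 hk ha1 _ z0 zsol.
suff -> : y = x by [].
by apply: (l1_contraction_fixpoint_unique _ _ _ _ q1 Fy Fx); exact: F_lip.
Qed.
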